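(* For every triangle $ABC$ with $b=c>a$, we have $AX_{25}<AX_{24}<AX_{14}$; that is, in the isosceles order, $X_{25}\prec X_{24}\prec X_{14}$.
   Context: $X_n$ denotes the $n$-th triangle center listed in Kimberling's Encyclopedia of Triangle Centers (ETC), given by barycentric coordinates in terms of $a=BC$, $b=CA$, $c=AB$. The isosceles order: $P\prec Q$ if $P$ is closer to $A$ than $Q$ in every isosceles triangle $ABC$ with $b=c>a$. *)

(* elementary geometry of a triangle given by its side lengths
   a = BC, b = CA, c = AB, over an arbitrary real closed field R. *)
From mathcomp Require Import all_boot all_order all_algebra.
Set Implicit Arguments. Unset Strict Implicit. Unset Printing Implicit Defensive.
Import Order.TTheory GRing.Theory Num.Theory.
Local Open Scope ring_scope.

Section Triangle.
Variable R : rcfType.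

Definition tri_area (a b c : R) : R :=
  let s := (a + b + c) / 2 in Num.sqrt (s * (s - a) * (s - b) * (s - c)).

Definition SA (a b c : R) : R := (b ^+ 2 + c ^+ 2 - a ^+ 2) / 2.
Definition S2 (a b c : R) : R := 4 * (tri_area a b c) ^+ 2.

(* A triangle center given by its first barycentric coordinate function f:
   barycentrics  f(a,b,c) : f(b,c,a) : f(c,a,b). *)
Definition center (f : R -> R -> R -> R) (a b c : R) : R * R * R :=
  (f a b c, f b c a, f c a b).

(* X(14), second isogonic center (ETC):
   a^4 - 2(b^2-c^2)^2 + a^2(b^2+c^2 - 4 sqrt3 Delta). *)
Definition X14f (a b c : R) : R :=
  a ^+ 4 - 2 * (b ^+ 2 - c ^+ 2) ^+ 2
  + a ^+ 2 * (b ^+ 2 + c ^+ 2 - 4 * Num.sqrt 3 * tri_area a b c).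

(* X(24), perspector of ABC and the orthic-of-orthic triangle (ETC):
   a^2 S_B S_C (S_A^2 - S^2). *)
Definition X24f (a b c : R) : R :=
  a ^+ 2 * SA b c a * SA c a b * (SA a b c ^+ 2 - S2 a b c).

(* X(25), homothetic center of the orthic and tangential triangles (ETC):
   a^2 S_B S_C  (= a^2 / S_A up to the common factor S_A S_B S_C). *)
Definition X25f (a b c : R) : R :=
  a ^+ 2 * SA b c a * SA c a b.

Definition X14 := center X14f.
Definition X24 := center X24f.
Definition X25 := center X25f.

(* Distance from vertex A to the point with (unnormalized) barycentrics
   (u : v : w):  with v' = v/(u+v+w), w' = w/(u+v+w) we have
   P - A = v'(B - A) + w'(C - A), hence
   AP^2 = v'^2 c^2 + w'^2 b^2 + 2 v' w' (B-A).(C-A),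
   (B-A).(C-A) = (b^2+c^2-a^2)/2. *)
Definition distA (a b c : R) (P : R * R * R) : R :=
  let: (u, v, w) := P in
  let v' := v / (u + v + w) in
  let w' := w / (u + v + w) in
  Num.sqrt (v' ^+ 2 * c ^+ 2 + w' ^+ 2 * b ^+ 2
            + v' * w' * (b ^+ 2 + c ^+ 2 - a ^+ 2)).

Definition iso_prec (P Q : R -> R -> R -> R * R * R) : Prop :=
  forall a b c : R, 0 < a -> a < b -> b = c ->
    distA a b c (P a b c) < distA a b c (Q a b c).

End Triangle.

From mathcomp Require Import all_boot all_order all_algebra.
From mathcomp Require Import ring lra.
Set Implicit Arguments. Unset Strict Implicit. Unset Printing Implicit Defensive.
Import Order.TTheory GRing.Theory Num.Theory.
Local Open Scope ring_scope.

(* When b = c, each of the three centers has barycentrics (u : v : v), so it lies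
   on the symmetry axis through A and its distance to A is t * sqrt(4b^2 - a^2)
   with t = v / (u + 2v); it suffices to compare t.  In Conway notation
   S_B = S_C = p = a^2/2 and S_A = q = b^2 - a^2/2, so that b > a means q > p
   and S^2 = p (p + 2q).  Then
     t(X25) = (p + q) q / (2 (p^2 + p q + q^2)),
     t(X24) = (p + q) q^2 / ((p + 2q) (p^2 + q^2)),
     t(X14) = 1/2 + p / (2 sqrt3 S)          (after rationalizing).
   t(X24) - t(X25) is a positive multiple of q - p.  Finally
   t(X24) - 1/2 = p (q^2 - 2pq - p^2) / (2 (p + 2q) (p^2 + q^2)), and this is
   below p / (2 sqrt3 S) because q^2 - 2pq - p^2 < p^2 + q^2 and, when
   q^2 - 2pq - p^2 > 0 (hence q > p), 2 sqrt3 S <= 2 (p + 2q). *)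

Section IsoscelesAxis.
Variable R : rcfType.
Implicit Types (f : R -> R -> R -> R) (a b u v : R).

Lemma distA_axis a b u v :
  distA a b b (u, v, v) = Num.sqrt ((v / (u + 2 * v)) ^+ 2 * (4 * b ^+ 2 - a ^+ 2)).
Proof.
rewrite /distA; have -> : u + v + v = u + 2 * v by ring.
by congr Num.sqrt; ring.
Qed.

Lemma distA_axis_lt a b u1 v1 u2 v2 : a ^+ 2 < 4 * b ^+ 2 ->
  0 <= v1 / (u1 + 2 * v1) < v2 / (u2 + 2 * v2) ->
  distA a b b (u1, v1, v1) < distA a b b (u2, v2, v2).
Proof.
move=> a2_lt /andP[t1_ge0 t12]; rewrite !distA_axis.
have K_gt0 : 0 < 4 * b ^+ 2 - a ^+ 2 by rewrite subr_gt0.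
have t2_gt0 := le_lt_trans t1_ge0 t12.
rewrite ltr_sqrt; last by rewrite mulr_gt0 ?exprn_gt0.
by rewrite ltr_pM2r // ltr_pXn2r // nnegrE ltW.
Qed.

Lemma center_isosceles f a b : (forall x y z, f x y z = f x z y) ->
  center f a b b = (f a b b, f b b a, f b b a).
Proof. by move=> f_sym; rewrite /center f_sym. Qed.

Definition axis_coord f a b := f b b a / (f a b b + 2 * f b b a).

Lemma axis_coordE f a b k N D : k != 0 ->
  f b b a = k * N -> f a b b + 2 * f b b a = k * D -> axis_coord f a b = N / D.
Proof. by move=> k_neq0 eN eD; rewrite /axis_coord eD eN -mulf_div divff // mul1r. Qed.

Lemma iso_prec_axis f g :
  (forall x y z, f x y z = f x z y) -> (forall x y z, g x y z = g x z y) ->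
  (forall a b, 0 < a -> a < b -> 0 <= axis_coord f a b < axis_coord g a b) ->
  iso_prec (center f) (center g).
Proof.
move=> f_sym g_sym fg a b c a_gt0 ab <-.
rewrite !center_isosceles //; apply: distA_axis_lt; first nra.
exact: fg.
Qed.

End IsoscelesAxis.

Section ConwayAxis.
Variable R : rcfType.
Implicit Types p q : R.

Definition axis25 p q := (p + q) * q / (2 * (p ^+ 2 + p * q + q ^+ 2)).
Definition axis24 p q := (p + q) * q ^+ 2 / ((p + 2 * q) * (p ^+ 2 + q ^+ 2)).
Definition axis14 p q := 2^-1 + p / Num.sqrt (12 * p * (p + 2 * q)).

Lemma axis25_ge0 p q : 0 < p -> 0 < q -> 0 <= axis25 p q.
Proof. by move=> p_gt0 q_gt0; rewrite divr_ge0 ?mulr_ge0 //; nra. Qed.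

Lemma axis24_ge0 p q : 0 < p -> 0 < q -> 0 <= axis24 p q.
Proof. by move=> p_gt0 q_gt0; rewrite divr_ge0 ?mulr_ge0 //; nra. Qed.

Lemma axis25_lt_axis24 p q : 0 < p -> p < q -> axis25 p q < axis24 p q.
Proof.
move=> p_gt0 pq; rewrite -subr_gt0 /axis24 /axis25.
have -> : (p + q) * q ^+ 2 / ((p + 2 * q) * (p ^+ 2 + q ^+ 2)) -
    (p + q) * q / (2 * (p ^+ 2 + p * q + q ^+ 2)) =
  p * q * (p + q) ^+ 2 * (q - p) /
    (2 * (p + 2 * q) * (p ^+ 2 + q ^+ 2) * (p ^+ 2 + p * q + q ^+ 2)).
  by field; apply/and3P; split; rewrite gt_eqF //; nra.
by rewrite divr_gt0 // !mulr_gt0 ?exprn_gt0 ?subr_gt0 //; nra.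
Qed.

Lemma axis24_lt_axis14 p q : 0 < p -> 0 < q -> axis24 p q < axis14 p q.
Proof.
move=> p_gt0 q_gt0; rewrite /axis14; set m := Num.sqrt _.
set r := q ^+ 2 - 2 * p * q - p ^+ 2.
set D := (p + 2 * q) * (p ^+ 2 + q ^+ 2).
have D_gt0 : 0 < D by rewrite mulr_gt0 //; nra.
have m_gt0 : 0 < m by rewrite sqrtr_gt0 !mulr_gt0 //; nra.
have r_lt : r < p ^+ 2 + q ^+ 2 by rewrite /r; nra.
have rm_lt : r * m < 2 * D.
  have [r_le0 | r_gt0] := lerP r 0; first by nra.
  have pq : p < q by rewrite /r in r_gt0; nra.
  have m_le : m <= 2 * (p + 2 * q).
    rewrite -[X in _ <= X]ger0_norm -?sqrtr_sqr; last by nra.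
    by rewrite ler_sqrt ?sqr_ge0 //; nra.
  rewrite /D; nra.
rewrite -subr_gt0 /axis24 -/D.
have -> : 2^-1 + p / m - (p + q) * q ^+ 2 / D = p * (2 * D - r * m) / (2 * D * m).
  by rewrite /D /r; field; rewrite !gt_eqF //; nra.
by rewrite divr_gt0 ?mulr_gt0 ?subr_gt0 //; nra.
Qed.

End ConwayAxis.

Section IsoscelesCenters.
Variable R : rcfType.
Implicit Types a b c : R.

Lemma tri_area_sym a b c : tri_area a b c = tri_area a c b.
Proof. by rewrite /tri_area /=; congr Num.sqrt; ring. Qed.

Lemma tri_area_rot a b c : tri_area a b c = tri_area b c a.
Proof. by rewrite /tri_area /=; congr Num.sqrt; ring. Qed.

Lemma S2_rot a b c : S2 a b c = S2 b c a.
Proof. by rewrite /S2 tri_area_rot. Qed.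

Lemma S2_isosceles a b : a ^+ 2 <= 4 * b ^+ 2 ->
  S2 a b b = a ^+ 2 * (4 * b ^+ 2 - a ^+ 2) / 4.
Proof.
move=> a2_le; rewrite /S2 /tri_area /=.
have -> : (a + b + b) / 2 * ((a + b + b) / 2 - a) * ((a + b + b) / 2 - b) *
    ((a + b + b) / 2 - b) = a ^+ 2 * (4 * b ^+ 2 - a ^+ 2) / 16 by field.
rewrite sqr_sqrtr; first by field.
by rewrite divr_ge0 // mulr_ge0 ?sqr_ge0 ?subr_ge0.
Qed.

Lemma X25f_sym a b c : X25f a b c = X25f a c b.
Proof. by rewrite /X25f /SA; ring. Qed.

Lemma X24f_sym a b c : X24f a b c = X24f a c b.
Proof. by rewrite /X24f /S2 tri_area_sym /SA; ring. Qed.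

Lemma X14f_sym a b c : X14f a b c = X14f a c b.
Proof. by rewrite /X14f tri_area_sym; ring. Qed.

Lemma axis_coord_X25f a b : 0 < a -> a < b ->
  axis_coord (@X25f R) a b = axis25 (a ^+ 2 / 2) (b ^+ 2 - a ^+ 2 / 2).
Proof.
move=> a_gt0 ab; apply: (@axis_coordE _ _ _ _ (a ^+ 2 / 2)).
- by rewrite gt_eqF // divr_gt0 // exprn_gt0.
- by rewrite /X25f /SA; field.
- by rewrite /X25f /SA; field.
Qed.

Lemma axis_coord_X24f a b : 0 < a -> a < b ->
  axis_coord (@X24f R) a b = axis24 (a ^+ 2 / 2) (b ^+ 2 - a ^+ 2 / 2).
Proof.
move=> a_gt0 ab; apply: (@axis_coordE _ _ _ _ (- 2 * (a ^+ 2 / 2) ^+ 2)).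
- by rewrite mulf_neq0 ?oppr_eq0 ?pnatr_eq0 // sqrf_eq0 gt_eqF // divr_gt0 // exprn_gt0.
- by rewrite /X24f -(S2_rot a) (S2_isosceles (ltW _)) /SA; [field | nra].
- by rewrite /X24f -(S2_rot a) (S2_isosceles (ltW _)) /SA; [field | nra].
Qed.

Lemma axis_coord_X14f a b : 0 < a -> a < b ->
  axis_coord (@X14f R) a b = axis14 (a ^+ 2 / 2) (b ^+ 2 - a ^+ 2 / 2).
Proof.
move=> a_gt0 ab; rewrite /axis14.
set p := a ^+ 2 / 2; set q := b ^+ 2 - a ^+ 2 / 2.
have p_gt0 : 0 < p by rewrite divr_gt0 // exprn_gt0.
have pq : p < q by rewrite /p /q; nra.
set m := 4 * Num.sqrt 3 * tri_area a b b.
have m_ge0 : 0 <= m by rewrite !mulr_ge0 ?sqrtr_ge0.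
have m2 : m ^+ 2 = 12 * p * (p + 2 * q).
  have -> : m ^+ 2 = 12 * S2 a b b by rewrite /m /S2 !exprMn sqr_sqrtr //; ring.
  by rewrite S2_isosceles /p /q; [field | nra].
have -> : Num.sqrt (12 * p * (p + 2 * q)) = m by rewrite -m2 sqrtr_sqr ger0_norm.
have m_gt0 : 0 < m.
  by rewrite lt_neqAle m_ge0 andbT eq_sym -sqrf_eq0 m2 gt_eqF //; nra.
have -> : 2^-1 + p / m = (m + 2 * p) / (2 * m) by field; rewrite gt_eqF.
apply: (@axis_coordE _ _ _ _ ((m - 4 * p - 2 * q) / 2)).
- (* m^2 - (4p + 2q)^2 = -4 (q - p)^2 *)
  rewrite mulf_neq0 ?invr_eq0 //; apply/eqP => em; nra.
- rewrite /X14f -(tri_area_rot a) -/m; rewrite /p /q in m2 *; lra.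
- rewrite /X14f -(tri_area_rot a) -/m; rewrite /p /q in m2 *; lra.
Qed.

End IsoscelesCenters.

Theorem theorem3p6 (R : rcfType) :
  iso_prec (@X25 R) (@X24 R) /\ iso_prec (@X24 R) (@X14 R).
Proof.
have conway (a b : R) : 0 < a -> a < b -> 0 < a ^+ 2 / 2 < b ^+ 2 - a ^+ 2 / 2.
  by move=> a_gt0 ab; rewrite divr_gt0 ?exprn_gt0 //=; nra.
split; apply: iso_prec_axis => [||a b a_gt0 ab].
- exact: X25f_sym.
- exact: X24f_sym.
- have /andP[p_gt0 pq] := conway a b a_gt0 ab.
  rewrite axis_coord_X25f // axis_coord_X24f //.
  by rewrite axis25_ge0 ?axis25_lt_axis24 // (lt_trans p_gt0).
- exact: X24f_sym.
- exact: X14f_sym.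
- have /andP[p_gt0 pq] := conway a b a_gt0 ab.
  have q_gt0 := lt_trans p_gt0 pq.
  by rewrite axis_coord_X24f // axis_coord_X14f // axis24_ge0 ?axis24_lt_axis14.
Qed.
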